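(* Let $M=(E,\Delta)$ be a matroid of rank $r$ that is realizable over some field, with $f$-vector $(f_0,\ldots,f_r)$. Then $f_i^2\ge f_{i-1}f_{i+1}$ for $i=1,\ldots,r-1$.
   Context: A matroid $M=(E,\Delta)$ has finite ground set $E$ and matroid complex $\Delta\subseteq 2^E$ of independent sets; $r$ is its rank. The $f$-vector is given by $f_i=\#\{A\in\Delta : |A|=i\}$. Realizable over a field $\mathbb{K}$ means the independent sets are exactly the linearly independent sublists of some list of vectors over $\mathbb{K}$ indexed by $E$. *)

From HB Require Import structures.
From mathcomp Require Import all_boot all_order all_algebra.
Set Implicit Arguments. Unset Strict Implicit. Unset Printing Implicit Defensive.
Import GRing.Theory.

Definition is_matroid (E : finType) (Delta : {set {set E}}) : Prop :=
  [/\ set0 \in Delta,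
      (forall A B : {set E}, B \in Delta -> A \subset B -> A \in Delta) &
      (forall A B : {set E}, A \in Delta -> B \in Delta -> #|A| < #|B| ->
         exists2 x, x \in B :\: A & x |: A \in Delta)].

Definition mrank (E : finType) (Delta : {set {set E}}) : nat :=
  \max_(A in Delta) #|A|.

Definition fvec (E : finType) (Delta : {set {set E}}) (i : nat) : nat :=
  #|[set A in Delta | #|A| == i]|.

Definition realizable_over (K : fieldType) (E : finType)
    (Delta : {set {set E}}) : Prop :=
  exists (n : nat) (v : E -> 'rV[K]_n),
    forall A : {set E}, (A \in Delta) <-> free [seq v x | x <- enum A].

Definition realizable (E : finType) (Delta : {set {set E}}) : Prop :=
  exists K : fieldType, realizable_over K Delta.

(* We prove the stronger inequality (i+1) f_(i+1) f_(i-1) <= i f_i^2 for every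
   matroid, following Brändén and Huh (Lorentzian polynomials).  Let r := i + 1 and consider the polynomial in y and (x_e)
     P_s(y, x) = \sum_(I independent, |I| <= r) y^(r-|I|)/(r-|I|)! x^I,
   all of whose derivatives are evaluated at the point (s, 1, ..., 1), s > 0.
   A symmetric form is called hyperbolic if it satisfies the reverse
   Cauchy-Schwarz inequality q(u) q(w) <= b(u, w)^2 whenever q(u) > 0.
   1. Quadratic forms: hyperbolicity follows from nonpositivity on a hyperplane.
   2. The local-global principle: if the Hessians of all partial derivatives
      are hyperbolic and satisfy the Euler relations, so is the Hessian itself.
   3. Base case: the Hessians of the (r-2)-nd derivatives of P are hyperbolic,
      because parallelism in a contraction of the matroid is an equivalence.
   4. By induction every Hessian of a derivative of P is hyperbolic; for the
      Hessian of P itself, evaluated at the point and at the y-axis, this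
      gives (i+1) c_0 c_2 <= i c_1^2 where c_t tends to f_(i+1-t) as s -> 0.
   5. A perturbation argument turns this into the integer inequality. *)

From HB Require Import structures.
From mathcomp Require Import all_boot all_order all_algebra.
From mathcomp Require Import ring lra zify.
Set Implicit Arguments. Unset Strict Implicit. Unset Printing Implicit Defensive.
Import Order.TTheory GRing.Theory Num.Theory.
Local Open Scope ring_scope.

Section QuadraticForms.
Variables (R : realFieldType) (V : finType).

Definition bil (Q : V -> V -> R) (u w : V -> R) : R :=
  \sum_j \sum_k Q j k * u j * w k.
Definition qf (Q : V -> V -> R) (w : V -> R) : R := bil Q w w.

(* Reverse Cauchy-Schwarz; for symmetric Q it means that Q has at most one
   positive eigenvalue. *)
Definition hyperbolic (Q : V -> V -> R) : Prop :=
  forall u w, 0 < qf Q u -> qf Q u * qf Q w <= bil Q u w ^+ 2.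

Lemma bilDr Q u v w a b :
  bil Q u (fun k => a * v k + b * w k) = a * bil Q u v + b * bil Q u w.
Proof.
rewrite /bil !mulr_sumr -big_split /=; apply: eq_bigr => j _.
rewrite !mulr_sumr -big_split /=; apply: eq_bigr => k _; ring.
Qed.

Lemma bilDl Q u v w a b :
  bil Q (fun k => a * v k + b * w k) u = a * bil Q v u + b * bil Q w u.
Proof.
rewrite /bil !mulr_sumr -big_split /=; apply: eq_bigr => j _.
rewrite !mulr_sumr -big_split /=; apply: eq_bigr => k _; ring.
Qed.

Lemma bilC Q u w : (forall j k, Q j k = Q k j) -> bil Q u w = bil Q w u.
Proof.
move=> Q_sym; rewrite /bil exchange_big; apply: eq_bigr => j _.
by apply: eq_bigr => k _; rewrite Q_sym; ring.
Qed.

Lemma eq_bil Q u u' w w' : u =1 u' -> w =1 w' -> bil Q u w = bil Q u' w'.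
Proof.
move=> eu ew; rewrite /bil; apply: eq_bigr => j _; apply: eq_bigr => k _.
by rewrite eu ew.
Qed.

Lemma eq_hyperbolic Q Q' : (forall j k, Q j k = Q' j k) -> hyperbolic Q -> hyperbolic Q'.
Proof.
move=> eQ hQ u w; have eb a b : bil Q a b = bil Q' a b.
  by rewrite /bil; apply: eq_bigr => j _; apply: eq_bigr => k _; rewrite eQ.
by rewrite /qf -!eb; exact: hQ.
Qed.

Lemma hyperbolic0 Q : (forall j k, Q j k = 0) -> hyperbolic Q.
Proof.
move=> Q0 u w; rewrite /qf /bil big1 ?ltxx // => j _.
by rewrite big1 // => k _; rewrite Q0 !mul0r.
Qed.

(* A symmetric form that is nonpositive on some hyperplane [l = 0] is
   hyperbolic: a vector with q(u) > 0 is off the hyperplane, and w splits as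
   a multiple of u plus a vector of the hyperplane. *)
Lemma hyperbolic_of_hyperplane Q (l : V -> R) :
  (forall j k, Q j k = Q k j) ->
  (forall z, \sum_j l j * z j = 0 -> qf Q z <= 0) -> hyperbolic Q.
Proof.
move=> Q_sym hplane u w qu_gt0.
have lu_neq0 : \sum_j l j * u j != 0.
  by apply/eqP => lu0; move: (hplane u lu0); rewrite leNgt qu_gt0.
pose t := (\sum_j l j * w j) / \sum_j l j * u j.
pose z := fun j => 1 * w j + (- t) * u j.
have lz0 : \sum_j l j * z j = 0.
  have -> : \sum_j l j * z j = \sum_j l j * w j - t * \sum_j l j * u j.
    by rewrite mulr_sumr -sumrB; apply: eq_bigr => j _; rewrite /z; ring.
  by rewrite /t divfK // subrr.
have w_split : w =1 fun j => 1 * z j + t * u j by move=> j; rewrite /z; ring.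
have := hplane z lz0; clearbody z => qz_le0.
have e1 : bil Q u w = bil Q u z + t * qf Q u.
  by rewrite (eq_bil Q (frefl u) w_split) bilDr /qf; ring.
have e2 : qf Q w = qf Q z + 2 * t * bil Q u z + t ^+ 2 * qf Q u.
  by rewrite /qf (eq_bil Q w_split w_split) bilDl !bilDr (bilC z u Q_sym); ring.
have quz_le0 : qf Q u * qf Q z <= 0 by rewrite pmulr_rle0.
rewrite e1 e2; move: (bil Q u z) (qf Q u) (qf Q z) qu_gt0 quz_le0 => B a c _ hac.
have : 0 <= (B + t * a) ^+ 2 - B ^+ 2 + B ^+ 2 by rewrite subrK sqr_ge0.
have -> : a * (c + 2 * t * B + t ^+ 2 * a) = a * c + ((B + t * a) ^+ 2 - B ^+ 2) by ring.
by move: hac (sqr_ge0 B); lra.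
Qed.

Lemma linear_surj_of_inj (A : V -> V -> R) :
  (forall y, (forall j, \sum_k A j k * y k = 0) -> forall j, y j = 0) ->
  forall b, exists y, forall j, \sum_k A j k * y k = b j.
Proof.
move=> A_inj b.
have sum_enum (F : V -> R) : \sum_v F v = \sum_(a < #|V|) F (enum_val a).
  rewrite (reindex (@enum_val V (mem predT))) //.
  by exists (@enum_rank V) => [a _|v _]; rewrite ?enum_valK ?enum_rankK.
pose M : 'M[R]_#|V| := \matrix_(a, c) A (enum_val a) (enum_val c).
have M_unit : M \in unitmx.
  rewrite -unitmx_tr -row_free_unit -kermx_eq0.
  apply/eqP/matrixP => i a; rewrite [in RHS]mxE.
  set u := row i (kermx M^T).
  have ker : u *m M^T = 0 by apply/sub_kermxP; rewrite row_sub.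
  have -> : kermx M^T i a = u 0 a by rewrite /u [RHS]mxE.
  clearbody u.
  have := A_inj (fun v => u 0 (enum_rank v)) ^~ (enum_val a).
  rewrite enum_valK; apply=> j; rewrite sum_enum.
  have := congr1 (fun m : 'rV_#|V| => m 0 (enum_rank j)) ker.
  rewrite !mxE /= => h; apply: (etrans _ h); apply: eq_bigr => c _.
  by rewrite !mxE enum_rankK enum_valK mulrC.
pose Y := invmx M *m \col_a b (enum_val a).
have MY : M *m Y = \col_a b (enum_val a) by rewrite /Y mulmxA mulmxV ?mul1mx.
exists (fun v => Y (enum_rank v) 0) => j; rewrite sum_enum.
have := congr1 (fun m : 'cV_#|V| => m (enum_rank j) 0) MY.
rewrite !mxE enum_rankK => h; apply: (etrans _ h); apply: eq_bigr => c _.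
by rewrite !mxE enum_rankK enum_valK.
Qed.

End QuadraticForms.

(* The local-global principle for hyperbolic forms (after Brändén-Huh), at one
   point x > 0: if the "Hessians" H i of the partial derivatives are hyperbolic
   and are tied to Q by the Euler relations below, then Q itself is hyperbolic. *)
Section LocalGlobal.
Variables (R : realFieldType) (V : finType) (x : V -> R) (Q : V -> V -> R).
Hypotheses (x_gt0 : forall j, 0 < x j) (Q_sym : forall j k, Q j k = Q k j)
  (Q_ge0 : forall j k, 0 <= Q j k).

Definition Qv (w : V -> R) (j : V) : R := \sum_k Q j k * w k.

(* The positive diagonal D with D x = Q x on the support of Q x. *)
Definition dg (j : V) : R := if 0 < Qv x j then Qv x j / x j else 1.

Definition xsupp (j : V) : R := if 0 < Qv x j then x j else 0.

Lemma Qv_x_ge0 j : 0 <= Qv x j.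
Proof. by apply: sumr_ge0 => k _; rewrite mulr_ge0 // ltW. Qed.

Lemma Qv_x_eq0 j : ~~ (0 < Qv x j) -> Qv x j = 0.
Proof. by move=> hj; apply/eqP; rewrite eq_le Qv_x_ge0 andbT leNgt. Qed.

Lemma Q_row0 j : ~~ (0 < Qv x j) -> forall k, Q j k = 0.
Proof.
move=> hj k; have := Qv_x_eq0 hj.
move/psumr_eq0P => /(_ (fun k _ => mulr_ge0 (Q_ge0 j k) (ltW (x_gt0 k))) k isT) /eqP.
by rewrite mulf_eq0 (gt_eqF (x_gt0 k)) orbF => /eqP.
Qed.

Lemma dg_gt0 j : 0 < dg j.
Proof. by rewrite /dg; case: ifP => // hj; rewrite divr_gt0. Qed.

Lemma Qv_xsupp j : Qv xsupp j = Qv x j.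
Proof.
rewrite /Qv; apply: eq_bigr => k _; rewrite /xsupp.
by case: ifP => // hk; rewrite Q_sym (Q_row0 (negbT hk)) !mul0r.
Qed.

Lemma dg_xsupp j : dg j * xsupp j = Qv x j.
Proof.
rewrite /dg /xsupp; case: ifP => hj; first by field; rewrite gt_eqF.
by rewrite mulr0 Qv_x_eq0 ?hj.
Qed.

(* Q <= D as quadratic forms: expand q(w) and use 2 w_j w_k <= w_j^2 x_k/x_j +
   w_k^2 x_j/x_k on each nonnegative entry of Q. *)
Lemma qf_le_dg w : qf Q w <= \sum_j dg j * w j ^+ 2.
Proof.
pose F j k := Q j k * (w j ^+ 2 * x k / x j).
have amgm : qf Q w <= \sum_j \sum_k (F j k + F k j) / 2.
  rewrite /qf /bil; apply: ler_sum => j _; apply: ler_sum => k _.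
  have xj := x_gt0 j; have xk := x_gt0 k.
  rewrite -subr_ge0; have -> : (F j k + F k j) / 2 - Q j k * w j * w k
           = Q j k * ((w j * x k - w k * x j) ^+ 2 / (2 * x j * x k)).
    by rewrite /F Q_sym; field; rewrite ?gt_eqF.
  by rewrite mulr_ge0 // divr_ge0 ?sqr_ge0 // !mulr_ge0 // ltW.
apply: (le_trans amgm).
have -> : \sum_j \sum_k (F j k + F k j) / 2 = \sum_j \sum_k F j k.
  have swap : \sum_j \sum_k F k j = \sum_j \sum_k F j k by rewrite exchange_big.
  transitivity ((\sum_j \sum_k F j k + \sum_j \sum_k F k j) / 2).
    rewrite -big_split mulr_suml; apply: eq_bigr => j _.
    by rewrite -big_split mulr_suml.
  by rewrite swap; field.
apply: ler_sum => j _; rewrite /F /dg; case: ifP => hj.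
  rewrite le_eqVlt; apply/orP; left; apply/eqP; rewrite /Qv !mulr_suml.
  by apply: eq_bigr => k _; field; rewrite gt_eqF.
by rewrite big1 ?mul1r ?sqr_ge0 // => k _; rewrite (Q_row0 (negbT hj)) mul0r.
Qed.

Hypothesis Q_hub : exists h, forall j, 0 < Qv x j -> 0 < Q h j.

Lemma dg_eigvec y : (forall j, Qv y j = dg j * y j) ->
  exists cst, forall j, y j = cst * xsupp j.
Proof.
move=> y_eig; have [h h_pos] := Q_hub.
have y_off j : ~~ (0 < Qv x j) -> y j = 0.
  move=> hj; have := y_eig j; rewrite /dg (negbTE hj) mul1r => <-.
  by rewrite /Qv big1 // => k _; rewrite (Q_row0 hj) mul0r.
case: (pickP (fun j => 0 < Qv x j)) => [j0 hj0 | none]; last first.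
  by exists 0 => j; rewrite mul0r y_off ?none.
have [js js_supp js_max] :=
  @Order.TotalTheory.arg_maxP _ R V j0 (fun j => 0 < Qv x j) (fun i => y i / x i) hj0.
exists (y js / x js).
pose z j := y js / x js * xsupp j - y j.
have z_ge0 j : 0 <= z j.
  rewrite /z /xsupp; case: ifP => hj.
    by have := js_max j hj; rewrite /= ler_pdivrMr ?x_gt0 // subr_ge0.
  by rewrite (y_off j (negbT hj)) mulr0 subrr.
have z_eig j : Qv z j = dg j * z j.
  have -> : Qv z j = y js / x js * Qv xsupp j - Qv y j.
    by rewrite /Qv mulr_sumr -sumrB; apply: eq_bigr => k _; rewrite /z; ring.
  by rewrite Qv_xsupp y_eig -dg_xsupp /z; ring.
(* a zero of the nonnegative eigenvector z propagates along positive entries *)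
have z_spread j k : z j = 0 -> 0 < Q j k -> z k = 0.
  move=> zj Qjk; have : Qv z j = 0 by rewrite z_eig zj mulr0.
  move/psumr_eq0P => /(_ (fun k _ => mulr_ge0 (Q_ge0 j k) (z_ge0 k)) k isT) /eqP.
  by rewrite mulf_eq0 (gt_eqF Qjk) => /eqP.
have z_js : z js = 0 by rewrite /z /xsupp js_supp; field; rewrite gt_eqF.
have z_h : z h = 0 by apply: z_spread z_js _; rewrite Q_sym h_pos.
move=> j; apply/eqP; rewrite -subr_eq0 -oppr_eq0 opprB; apply/eqP.
case: (boolP (0 < Qv x j)) => hj; first exact: z_spread z_h (h_pos j hj).
by rewrite /xsupp (negbTE hj) (y_off j hj) mulr0 subrr.
Qed.

(* The operator A = D - Q + (Qx)(Qx)^T; the proof of the local-global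
   principle solves a linear system with it. *)
Definition lgA (j k : V) : R := (if j == k then dg j else 0) - Q j k + Qv x j * Qv x k.

Definition sx : R := \sum_j xsupp j * Qv x j.

Lemma lgA_mul y j :
  \sum_k lgA j k * y k = dg j * y j - Qv y j + Qv x j * \sum_k Qv x k * y k.
Proof.
have -> : \sum_k lgA j k * y k = \sum_k (if j == k then dg j else 0) * y k
    - Qv y j + Qv x j * \sum_k Qv x k * y k.
  rewrite [Qv y j]/Qv mulr_sumr -sumrB -big_split; apply: eq_bigr => k _ /=.
  by rewrite /lgA; ring.
rewrite (bigD1 j) //= eqxx big1 ?addr0 // => k hk.
by rewrite eq_sym (negbTE hk) mul0r.
Qed.

Lemma xsupp_lgA y :
  \sum_j xsupp j * (\sum_k lgA j k * y k) = sx * \sum_k Qv x k * y k.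
Proof.
set L := \sum_k Qv x k * y k.
under eq_bigr do rewrite lgA_mul.
have -> : \sum_j xsupp j * (dg j * y j - Qv y j + Qv x j * L) =
    \sum_j dg j * xsupp j * y j - \sum_j xsupp j * Qv y j + sx * L.
  by rewrite /sx mulr_suml -sumrB -big_split; apply: eq_bigr => j _ /=; ring.
have -> : \sum_j xsupp j * Qv y j = \sum_j Qv x j * y j.
  rewrite /Qv; under eq_bigr do rewrite mulr_sumr; rewrite exchange_big.
  apply: eq_bigr => k _; have := Qv_xsupp k; rewrite /Qv => <-.
  by rewrite mulr_suml; apply: eq_bigr => j _; rewrite Q_sym; ring.
by under eq_bigr do rewrite dg_xsupp; rewrite subrr add0r.
Qed.

(* A is injective: a kernel vector solves Q y = D y, hence is a multiple of
   xsupp, and pairing with xsupp forces the multiple to vanish. *)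
Lemma lgA_inj : 0 < sx ->
  forall y, (forall j, \sum_k lgA j k * y k = 0) -> forall j, y j = 0.
Proof.
move=> sx_gt0 y Ay0.
have qy0 : \sum_k Qv x k * y k = 0.
  have := xsupp_lgA y; rewrite big1 => [/esym/eqP|j _]; last by rewrite Ay0 mulr0.
  by rewrite mulf_eq0 (gt_eqF sx_gt0) => /eqP.
have [cst y_prop] : exists cst, forall j, y j = cst * xsupp j.
  apply: dg_eigvec => j; apply/eqP; rewrite -subr_eq0 -oppr_eq0 opprB.
  by have := Ay0 j; rewrite lgA_mul qy0 mulr0 addr0 => ->.
have : cst * sx = 0.
  rewrite -qy0 /sx mulr_sumr; apply: eq_bigr => j _; rewrite y_prop; ring.
by move/eqP; rewrite mulf_eq0 (gt_eqF sx_gt0) orbF => /eqP cst0 j; rewrite y_prop cst0 mul0r.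
Qed.

Section Hessians.
Variables (H : V -> V -> V -> R) (c : R).
Hypotheses (c_gt0 : 0 < c) (H_sym : forall i j k, H i j k = H i k j)
  (H_ge0 : forall i j k, 0 <= H i j k)
  (H_euler : forall j k, \sum_i x i * H i j k = c * Q j k)
  (H_row : forall i j, \sum_k H i j k * x k = c * Q i j)
  (H_hyp : forall i, hyperbolic (H i)).

Lemma qf_H_x i : qf (H i) x = c * Qv x i.
Proof.
rewrite /qf /bil /Qv mulr_sumr; apply: eq_bigr => j _.
by rewrite mulrA -H_row mulr_suml; apply: eq_bigr => k _; ring.
Qed.

Lemma bil_H_x i w : bil (H i) x w = c * Qv w i.
Proof.
rewrite /bil exchange_big /Qv mulr_sumr; apply: eq_bigr => k _.
by rewrite mulrA -H_row !mulr_suml; apply: eq_bigr => j _; rewrite H_sym; ring.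
Qed.

Lemma qf_Q_H w : c * qf Q w = \sum_i x i * qf (H i) w.
Proof.
rewrite /qf /bil mulr_sumr.
under [RHS]eq_bigr do rewrite mulr_sumr; rewrite exchange_big.
apply: eq_bigr => j _; under [RHS]eq_bigr do rewrite mulr_sumr.
rewrite mulr_sumr exchange_big; apply: eq_bigr => k _.
by rewrite !mulrA -H_euler !mulr_suml; apply: eq_bigr => i _; ring.
Qed.

(* Each local form is controlled by its value on x: hyperbolicity of H i
   applied to x and w. *)
Lemma xqf_H_le i w : x i * qf (H i) w <= c * (Qv w i ^+ 2 / dg i).
Proof.
have xi := x_gt0 i; case: (boolP (0 < Qv x i)) => hi.
  have := @H_hyp i x w; rewrite qf_H_x bil_H_x => /(_ (mulr_gt0 c_gt0 hi)).
  rewrite /dg hi.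
  have -> : c * (Qv w i ^+ 2 / (Qv x i / x i)) =
            x i * ((c * Qv w i) ^+ 2 / (c * Qv x i)).
    by field; rewrite !gt_eqF.
  by move=> h; rewrite ler_pM2l // ler_pdivlMr ?mulr_gt0 // mulrC.
have H0 j k : H i j k = 0.
  have : qf (H i) x = 0 by rewrite qf_H_x Qv_x_eq0 ?mulr0.
  move/psumr_eq0P => /(_ (fun j _ => sumr_ge0 _ (fun k _ =>
    mulr_ge0 (mulr_ge0 (H_ge0 i j k) (ltW (x_gt0 j))) (ltW (x_gt0 k)))) j isT).
  move/psumr_eq0P => /(_ (fun k _ =>
    mulr_ge0 (mulr_ge0 (H_ge0 i j k) (ltW (x_gt0 j))) (ltW (x_gt0 k))) k isT) /eqP.
  by rewrite !mulf_eq0 !(gt_eqF (x_gt0 _)) !orbF => /eqP.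
rewrite /qf /bil big1 ?mulr0 => [|j _]; last by rewrite big1 // => k _; rewrite H0 !mul0r.
by rewrite mulr_ge0 ?divr_ge0 ?sqr_ge0 ?ltW ?dg_gt0.
Qed.

Lemma qf_le_dg_inv w : qf Q w <= \sum_i Qv w i ^+ 2 / dg i.
Proof.
rewrite -(ler_pM2l c_gt0) qf_Q_H mulr_sumr; apply: ler_sum => i _.
exact: xqf_H_le.
Qed.

(* By [hyperbolic_of_hyperplane] it suffices to
   show q <= 0 on the hyperplane <Qx, z> = 0.  Solve A y = D z there; then
   z = y - D^-1 Q y, and q(z) <= 0 follows from Q <= Q D^-1 Q and Q <= D. *)
Theorem local_global : hyperbolic Q.
Proof.
apply: (hyperbolic_of_hyperplane (l := Qv x)) => // z qz0.
case: (pickP (fun j => 0 < Qv x j)) => [j0 hj0 | none]; last first.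
  rewrite /qf /bil big1 // => j _; rewrite big1 // => k _.
  by rewrite (Q_row0 (j := j)) ?none // !mul0r.
have sx_gt0 : 0 < sx.
  rewrite /sx (bigD1 j0) //= ltr_pwDl //; first by rewrite /xsupp hj0 mulr_gt0.
  by apply: sumr_ge0 => j _; rewrite mulr_ge0 ?Qv_x_ge0 // /xsupp; case: ifP => // _; rewrite ltW.
have [y Ay] := linear_surj_of_inj (lgA_inj sx_gt0) (fun j => dg j * z j).
have qy0 : \sum_k Qv x k * y k = 0.
  have := xsupp_lgA y; under eq_bigr do rewrite Ay mulrA (mulrC (xsupp _)) dg_xsupp.
  by rewrite qz0 => /esym/eqP; rewrite mulf_eq0 (gt_eqF sx_gt0) => /eqP.
pose b j := Qv y j / dg j.
have z_split : z =1 fun j => 1 * y j + (-1) * b j.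
  move=> j; have := Ay j; rewrite lgA_mul qy0 mulr0 addr0 /b => Ayj.
  have dj := dg_gt0 j; have -> : z j = (dg j)^-1 * (dg j * z j) by rewrite mulKf ?gt_eqF.
  by rewrite -Ayj; field; rewrite gt_eqF.
have qz : qf Q z = qf Q y - 2 * bil Q y b + qf Q b.
  by rewrite /qf (eq_bil Q z_split z_split) bilDl !bilDr (bilC b y Q_sym); ring.
have byb : bil Q y b = \sum_j dg j * b j ^+ 2.
  rewrite /bil exchange_big; apply: eq_bigr => k _; rewrite -mulr_suml.
  have -> : \sum_j Q j k * y j = Qv y k by apply: eq_bigr => j _; rewrite Q_sym.
  by rewrite /b; field; rewrite gt_eqF ?dg_gt0.
have Qy_le : qf Q y <= \sum_j dg j * b j ^+ 2.
  rewrite (le_trans (qf_le_dg_inv y)) // le_eqVlt; apply/orP; left; apply/eqP.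
  by apply: eq_bigr => j _; rewrite /b; field; rewrite gt_eqF ?dg_gt0.
by rewrite qz byb; move: (qf_le_dg b) Qy_le; lra.
Qed.

End Hessians.
End LocalGlobal.

Lemma big_option (R : nmodType) (T : finType) (F : option T -> R) :
  \sum_v F v = F None + \sum_e F (Some e).
Proof.
rewrite (bigD1 None) //=; congr (_ + _).
rewrite (reindex_omap Some id) /=; last by move=> [e|].
by apply: eq_bigl => e; rewrite eqxx.
Qed.

Lemma perm_swap2 (T : eqType) (a b : T) L : perm_eq (a :: b :: L) (b :: a :: L).
Proof. by apply/permP => p /=; rewrite addnCA. Qed.

(* For an equivalence relation on A, the form \sum_(e ~ f) y_e y_f is a sum of
   squares: it equals \sum_(e in A) (sum of y over the class of e)^2 / |class|. *)
Lemma sum_equiv_ge0 (R : realFieldType) (T : finType) (A : pred T) (rl : rel T)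
    (y : T -> R) :
  (forall e, rl e e) -> (forall e f, rl e f = rl f e) ->
  (forall e f g, A e -> A f -> A g -> rl e f -> rl f g -> rl e g) ->
  0 <= \sum_e \sum_f (if A e && A f && rl e f then y e * y f else 0).
Proof.
move=> rl_refl rl_sym rl_trans.
pose cls e := [pred f | A f && rl e f].
pose n e := #|cls e|.
pose m e := \sum_(f in cls e) y f.
have same_cls e f : A e -> A f -> rl e f -> cls e =i cls f.
  move=> Ae Af ef g; rewrite !inE; case: (boolP (A g)) => Ag //=.
  by apply/idP/idP => h; [apply: (rl_trans f e g); rewrite // rl_sym | exact: (rl_trans e f g)].
have n_gt0 e : A e -> (0 < n e)%N.
  by move=> Ae; apply/card_gt0P; exists e; rewrite inE Ae rl_refl.
have lhs : \sum_e \sum_f (if A e && A f && rl e f then y e * y f else 0) =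
           \sum_(e | A e) y e * m e.
  rewrite [RHS]big_mkcond; apply: eq_bigr => e _; case: (boolP (A e)) => Ae /=.
    by rewrite /m mulr_sumr [RHS]big_mkcond; apply: eq_bigr => f _; rewrite !inE.
  by rewrite big1.
have rhs : \sum_(e | A e) m e ^+ 2 / (n e)%:R = \sum_(e | A e) y e * m e.
  transitivity (\sum_(e | A e) \sum_(f in cls e) y f * (m f / (n f)%:R)).
    apply: eq_bigr => e Ae; rewrite expr2 -mulrA {1}/m mulr_suml.
    apply: eq_bigr => f /andP [Af ef].
    have -> : n f = n e by apply: eq_card => g; rewrite (same_cls e f).
    by have -> : m f = m e by apply: eq_bigl => g; rewrite (same_cls e f).
  rewrite (exchange_big_dep A) => [|e f _ /andP [] //].
  apply: eq_bigr => f Af; rewrite sumr_const.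
  have -> : #|[pred e | A e & f \in cls e]| = n f.
    by apply: eq_card => e; rewrite !inE Af /= rl_sym.
  by field; rewrite pnatr_eq0 -lt0n n_gt0.
by rewrite lhs -rhs; apply: sumr_ge0 => e _; rewrite divr_ge0 ?sqr_ge0 ?ler0n.
Qed.

(* The homogenized, truncated independence polynomial of Delta (Brändén-Huh)
     P(y, x) = \sum_(I in Delta, |I| <= r) y ^ (r - |I|) / (r - |I|)! * x^I,
   of degree r, and the values of its partial derivatives at the point
   (y, x) = (s, 1, ..., 1). *)
Section MatroidPolynomial.
Variables (R : realFieldType) (E : finType) (Delta : {set {set E}}) (r : nat) (s : R).
Hypothesis s_gt0 : 0 < s.

(* The value at y = s of the a-th y-derivative of y^(r-n)/(r-n)! (which is 0
   when n > r, the monomials of P having degree r). *)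
Definition dpow (a n : nat) : R :=
  if (n + a <= r)%N then s ^+ (r - n - a) / (r - n - a)`!%:R else 0.

(* The value of d_y^a d_(x_S) P at the point. *)
Definition dPset (a : nat) (S : {set E}) : R :=
  \sum_(I in Delta | S \subset I) dpow a #|I|.

(* The variables are indexed by option E: None is y and Some e is x_e; a list
   L of variables stands for the differential operator d^L. *)
Definition ycount (L : seq (option E)) : nat := count (fun v => v == None) L.
Definition xvars (L : seq (option E)) : seq E := pmap id L.

(* The value of d^L P at the point (a repeated x-variable kills P). *)
Definition dP (L : seq (option E)) : R :=
  if uniq (xvars L) then dPset (ycount L) [set e in xvars L] else 0.

Definition pt (v : option E) : R := if v is None then s else 1.

Lemma pt_gt0 v : 0 < pt v.
Proof. by case: v => [e|] /=; [exact: ltr01 | exact: s_gt0]. Qed.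

Lemma dpow_step a n : s * dpow a.+1 n = (r - n - a)%:R * dpow a n.
Proof.
rewrite /dpow; case: (leqP (n + a.+1) r) => h1.
  have -> : (n + a <= r)%N by lia.
  have -> : (r - n - a = (r - n - a.+1).+1)%N by lia.
  rewrite factS natrM exprS.
  have f0 : ((r - n - a.+1)`!)%:R != 0 :> R by rewrite pnatr_eq0 -lt0n fact_gt0.
  by field; rewrite f0 /= addrC natr1 pnatr_eq0.
case: ifP => h2; last by rewrite !mulr0.
have -> : (r - n - a = 0)%N by lia.
by rewrite mul0r mulr0.
Qed.

Lemma dpow_ge0 a n : 0 <= dpow a n.
Proof.
by rewrite /dpow; case: ifP => // _; rewrite divr_ge0 ?exprn_ge0 ?ler0n ?ltW.
Qed.

Lemma dpow_gt0 a n : (n + a <= r)%N -> 0 < dpow a n.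
Proof. by move=> h; rewrite /dpow h divr_gt0 ?exprn_gt0 // ltr0n fact_gt0. Qed.

Lemma dPset_ge0 a (S : {set E}) : 0 <= dPset a S.
Proof. by apply: sumr_ge0 => I _; exact: dpow_ge0. Qed.

Lemma dP_ge0 L : 0 <= dP L.
Proof. by rewrite /dP; case: ifP => // _; exact: dPset_ge0. Qed.

Lemma size_xvars L : size L = (ycount L + size (xvars L))%N.
Proof. by elim: L => [//|[e|] L IH] /=; rewrite IH /ycount /=; lia. Qed.

Lemma card_xvars L : uniq (xvars L) -> #|[set e in xvars L]| = size (xvars L).
Proof. by move=> uL; rewrite cardsE; apply/card_uniqP. Qed.

Lemma double_count (S : {set E}) (F : {set E} -> R) :
  \sum_(e | e \notin S) \sum_(I in Delta | (e |: S) \subset I) F I =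
  \sum_(I in Delta | S \subset I) #|I :\: S|%:R * F I.
Proof.
have -> : \sum_(e | e \notin S) \sum_(I in Delta | (e |: S) \subset I) F I =
  \sum_e \sum_I (if (e \notin S) && ((I \in Delta) && ((e |: S) \subset I)) then F I else 0).
  rewrite big_mkcond; apply: eq_bigr => e _.
  by case: ifP => he /=; rewrite ?big_mkcond // big1.
rewrite exchange_big [RHS]big_mkcond; apply: eq_bigr => I _.
case: ifP => [/andP [hD hS]|hI].
  rewrite mulr_natl -sumr_const [RHS]big_mkcond /=; apply: eq_bigr => e _.
  rewrite hD /= subUset sub1set hS andbT in_setD.
  by case: (e \in S); case: (e \in I); rewrite ?mul1r.
rewrite big1 // => e _; case: ifP => // /and3P [_ hD hS]; move: hI.
by rewrite hD; move: hS; rewrite subUset => /andP [_ ->].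
Qed.

(* Euler's identity at the level of sets: differentiate once more in y or in
   a new x_e, and sum with the weights of the point. *)
Lemma dPset_euler a (S : {set E}) :
  s * dPset a.+1 S + \sum_(e | e \notin S) dPset a (e |: S) =
  (r - (a + #|S|))%:R * dPset a S.
Proof.
rewrite /dPset double_count mulr_sumr -big_split mulr_sumr.
apply: eq_bigr => I /andP [_ hS] /=; rewrite dpow_step -mulrDl -natrD.
have hk : (#|S| <= #|I|)%N by apply: subset_leq_card.
rewrite /dpow; case: ifP => h; last by rewrite !mulr0.
by rewrite cardsD (setIidPr hS); congr (_%:R * _); lia.
Qed.

(* Euler's identity for the form d^L P, homogeneous of degree r - |L|. *)
Lemma dP_euler L : \sum_v pt v * dP (v :: L) = (r - size L)%:R * dP L.
Proof.
rewrite big_option /dP /=.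
case: (boolP (uniq (xvars L))) => uL; last first.
  by rewrite !mulr0 big1 ?addr0 // => e _; rewrite andbF mulr0.
rewrite /ycount /= -/(ycount L) add1n add0n size_xvars -(card_xvars uL).
rewrite -dPset_euler; congr (_ + _).
rewrite [RHS]big_mkcond; apply: eq_bigr => e _ /=.
by rewrite inE andbT mul1r; case: ifP => // _; rewrite set_cons.
Qed.

Lemma dP_perm L1 L2 : perm_eq L1 L2 -> dP L1 = dP L2.
Proof.
move=> pL; have px : perm_eq (xvars L1) (xvars L2) by apply: perm_pmap.
rewrite /dP (perm_uniq px) /ycount (permP pL).
by congr (if _ then dPset _ _ else _); apply/setP => e; rewrite !inE (perm_mem px).
Qed.

Hypothesis Delta_down : forall A B : {set E}, B \in Delta -> A \subset B -> A \in Delta.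

Lemma dPset_indep a (S : {set E}) : 0 < dPset a S -> S \in Delta.
Proof.
apply: contraTT => hS; rewrite -leNgt le_eqVlt; apply/orP; left; apply/eqP.
by rewrite /dPset big1 // => I /andP [hI hSI]; move: hS; rewrite (Delta_down hI hSI).
Qed.

Lemma dP_y_gt0 j L : ((size L).+2 <= r)%N -> 0 < dP (j :: L) -> 0 < dP (None :: j :: L).
Proof.
rewrite /dP /= => hr; case: ifP => uL; last by rewrite ltxx.
set S := [set e in xvars (j :: L)] => h; have hS := dPset_indep h.
rewrite /dPset (bigD1 S) /=; last by rewrite hS subxx.
rewrite ltr_pwDl //; last by apply: sumr_ge0 => I _; exact: dpow_ge0.
apply: dpow_gt0; rewrite card_xvars //.
by move: (size_xvars (j :: L)); rewrite /ycount /=; lia.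
Qed.

(* At the top degree only the term I = S survives. *)
Lemma dPset_top a (S : {set E}) : (#|S| + a = r)%N -> dPset a S = (S \in Delta)%:R.
Proof.
move=> hr; have wI (I : {set E}) : S \subset I -> dpow a #|I| = (I == S)%:R.
  move=> hSI; case: (eqVneq I S) => [->|ne].
    rewrite /dpow hr leqnn; have -> : (r - #|S| - a = 0)%N by lia.
    by rewrite divr1.
  rewrite /dpow; case: ifP => // hle.
  have /eqP e : S == I by rewrite eqEcard hSI /=; lia.
  by move: ne; rewrite e eqxx.
rewrite /dPset (eq_bigr (fun I => (I == S)%:R)); last by move=> I /andP [_]; exact: wI.
case: (boolP (S \in Delta)) => hS.
  rewrite (bigD1 S) /=; last by rewrite hS subxx.
  by rewrite eqxx big1 ?addr0 // => I /andP [_ /negbTE ->].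
by rewrite big1 // => I /andP [hI _]; case: eqP hI => // ->; rewrite (negbTE hS).
Qed.

Lemma dP_top L : size L = r ->
  dP L = if uniq (xvars L) then ([set e in xvars L] \in Delta)%:R else 0.
Proof.
rewrite /dP => hL; case: ifP => // uL; apply: dPset_top.
by rewrite card_xvars // -hL size_xvars addnC.
Qed.

Hypothesis Delta_aug : forall A B : {set E}, A \in Delta -> B \in Delta ->
  (#|A| < #|B|)%N -> exists2 x, x \in B :\: A & x |: A \in Delta.

(* Base case: the quadratic forms d^L P with |L| = r - 2.  Their coefficients
   are 0/1 and describe the rank-2 truncation of the contraction M / S, where
   S is the set of x-variables in L. *)
Section BaseCase.
Variable L : seq (option E).
Hypothesis L_size : (size L + 2 = r)%N.

Lemma dP_quadratic j k : dP [:: j, k & L] =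
  if uniq (xvars [:: j, k & L]) then ([set e in xvars [:: j, k & L]] \in Delta)%:R else 0.
Proof. by apply: dP_top; rewrite -L_size addn2. Qed.

Hypotheses (L_uniq : uniq (xvars L)) (S_indep : [set e in xvars L] \in Delta).
Let S := [set e in xvars L].

Lemma mem_S e : (e \in xvars L) = (e \in S).
Proof. by rewrite inE. Qed.

(* e is not a loop of M / S *)
Definition nonloop (e : E) : bool := (e \notin S) && (e |: S \in Delta).

(* e and f are equal or parallel in M / S *)
Definition parallel (e f : E) : bool := (e == f) || ~~ (e |: (f |: S) \in Delta).

Lemma dP_yy : dP [:: None, None & L] = 1.
Proof. by rewrite dP_quadratic /= L_uniq S_indep. Qed.

Lemma dP_yx e : dP [:: None, Some e & L] = (nonloop e)%:R.
Proof.
by rewrite dP_quadratic /= L_uniq andbT set_cons /nonloop mem_S; case: (e \notin S).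
Qed.

Lemma dP_xy e : dP [:: Some e, None & L] = (nonloop e)%:R.
Proof. by rewrite -dP_yx; apply: dP_perm; exact: perm_swap2. Qed.

Lemma dP_xx e f : dP [:: Some e, Some f & L] = (nonloop e && nonloop f && ~~ parallel e f)%:R.
Proof.
rewrite dP_quadratic /= L_uniq andbT !set_cons -/S in_cons negb_or !mem_S /nonloop /parallel.
case: (boolP (e |: (f |: S) \in Delta)) => hef; last by case: ifP; rewrite ?orbT ?andbF.
have -> : e |: S \in Delta by apply: (Delta_down hef); rewrite setUCA subsetUr.
have -> : f |: S \in Delta by apply: (Delta_down hef); rewrite subsetUr.
by case: (e == f); case: (e \in S); case: (f \in S).
Qed.

Lemma parallel_refl e : parallel e e.
Proof. by rewrite /parallel eqxx. Qed.

Lemma parallel_sym e f : parallel e f = parallel f e.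
Proof. by rewrite /parallel eq_sym setUCA. Qed.

(* Parallelism is transitive on nonloops, by the exchange axiom. *)
Lemma parallel_trans e f g : nonloop e -> nonloop f -> nonloop g ->
  parallel e f -> parallel f g -> parallel e g.
Proof.
move=> /andP [eS _] /andP [fS fD] /andP [gS _] ef fg.
case: (eqVneq e g) => [->|neg]; first exact: parallel_refl.
case: (eqVneq e f) => [ef'|nef]; first by rewrite ef'.
case: (eqVneq f g) => [fg'|nfg]; first by rewrite -fg'.
move: ef fg; rewrite /parallel (negbTE nef) (negbTE nfg) (negbTE neg) /= => hef hfg.
apply/negP => egD.
have hlt : (#|f |: S| < #|e |: (g |: S)|)%N.
  rewrite !cardsU1 fS gS in_setU1 negb_or neg eS /=; lia.
have [x] := Delta_aug fD egD hlt.
rewrite !inE negb_or => /andP [/andP [_ nxS] x_eg] xD.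
have /orP [/eqP xe|/eqP xg] : (x == e) || (x == g).
  by move: x_eg; rewrite (negbTE nxS) orbF.
  by move: hef; rewrite -xe xD.
by move: hfg; rewrite setUCA -xg xD.
Qed.

Lemma qf_quadratic z (lam := \sum_e (nonloop e)%:R * z (Some e)) :
  qf (fun j k => dP [:: j, k & L]) z = z None ^+ 2 + 2 * z None * lam +
    \sum_e \sum_f (nonloop e && nonloop f && ~~ parallel e f)%:R * z (Some e) * z (Some f).
Proof.
rewrite /qf /bil big_option big_option dP_yy.
under eq_bigr do rewrite dP_yx.
under [X in _ + X]eq_bigr do rewrite big_option dP_xy.
under [X in _ + X]eq_bigr do under eq_bigr do rewrite dP_xx.
rewrite big_split /= [X in _ + (X + _)](_ : _ = z None * lam).
  rewrite [X in _ + X + _](_ : _ = z None * lam); first by ring.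
  by rewrite /lam mulr_sumr; apply: eq_bigr => e _; ring.
by rewrite /lam mulr_sumr; apply: eq_bigr => e _; ring.
Qed.

(* On the hyperplane z_y + lam = 0 the form is minus a sum of squares
   ([sum_equiv_ge0] for parallelism on the nonloops). *)
Lemma hyperbolic_quadratic_indep : hyperbolic (fun j k => dP [:: j, k & L]).
Proof.
apply: (hyperbolic_of_hyperplane (l := fun j => dP [:: None, j & L])).
  by move=> j k; apply: dP_perm; exact: perm_swap2.
move=> z; rewrite big_option dP_yy mul1r qf_quadratic.
under eq_bigr do rewrite dP_yx.
set lam := \sum_e (nonloop e)%:R * z (Some e) => hz.
have -> : z None = - lam by apply/eqP; rewrite -subr_eq0 opprK hz.
have P_ge0 := sum_equiv_ge0 (fun e => z (Some e)) parallel_refl parallel_sym parallel_trans.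
have -> : \sum_e \sum_f (nonloop e && nonloop f && ~~ parallel e f)%:R * z (Some e) * z (Some f)
  = lam ^+ 2 - \sum_e \sum_f (if nonloop e && nonloop f && parallel e f
                                then z (Some e) * z (Some f) else 0).
  rewrite expr2 {1}/lam mulr_suml -sumrB; apply: eq_bigr => e _.
  rewrite /lam mulr_sumr -sumrB; apply: eq_bigr => f _.
  by case: (nonloop e); case: (nonloop f); case: (parallel e f); rewrite /=; ring.
move: P_ge0; set P := \sum_e _ => P_ge0.
have -> : (- lam) ^+ 2 + 2 * - lam * lam + (lam ^+ 2 - P) = - P by ring.
by rewrite oppr_le0.
Qed.

End BaseCase.

(* The base case in general: when L repeats an x-variable or its x-variables
   are dependent, the form vanishes identically. *)
Lemma hyperbolic_quadratic L : (size L + 2 = r)%N -> hyperbolic (fun j k => dP [:: j, k & L]).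
Proof.
move=> L_size; case L_uniq: (uniq (xvars L)); last first.
  apply: hyperbolic0 => j k; rewrite dP_quadratic //.
  by case: j k => [?|] [?|] /=; rewrite L_uniq ?andbF.
case: (boolP ([set e in xvars L] \in Delta)) => S_indep; first exact: hyperbolic_quadratic_indep.
apply: hyperbolic0 => j k; rewrite dP_quadratic //; case: ifP => // _.
apply/eqP; rewrite pnatr_eq0 eqb0; apply: contraNN S_indep => /Delta_down; apply.
apply/subsetP => e; rewrite !inE => he.
by case: j k => [?|] [?|] /=; rewrite ?in_cons he ?orbT.
Qed.

(* Induction on the number of derivatives, via the local-global principle: the
   Hessians of the partial derivatives d_i d^L P are the forms for i :: L, and
   the Euler identity supplies the relations required by [local_global]. *)
Lemma hyperbolic_dP n L : (size L + 2 + n = r)%N -> hyperbolic (fun j k => dP [:: j, k & L]).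
Proof.
elim: n L => [|n IH] L hL; first by rewrite addn0 in hL; exact: hyperbolic_quadratic.
have euler3 L' : size L' = (size L).+2 ->
    \sum_i pt i * dP (i :: L') = (r - size L - 2)%:R * dP L'.
  by move=> hs; rewrite dP_euler hs; congr (_%:R * _); lia.
apply: (@local_global _ _ pt _ pt_gt0 _ _ _ (fun i j k => dP [:: i, j, k & L])
                     (r - size L - 2)%:R).
- by move=> j k; apply: dP_perm; exact: perm_swap2.
- by move=> j k; exact: dP_ge0.
- have hr : ((size L).+2 <= r)%N by rewrite -hL -addn2 leq_addr.
  exists None => j; rewrite /Qv.
  under eq_bigr do rewrite mulrC (dP_perm (perm_swap2 _ _ L)).
  by rewrite dP_euler pmulr_rgt0 ?ltr0n ?subn_gt0 //; exact: dP_y_gt0.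
- by rewrite ltr0n; lia.
- by move=> i j k; apply: dP_perm; rewrite perm_cons perm_swap2.
- by move=> i j k; exact: dP_ge0.
- by move=> j k; exact: euler3.
- move=> i j; rewrite -euler3 //; apply: eq_bigr => k _; rewrite mulrC.
  by congr (_ * _); apply: dP_perm; apply/permP => p /=; lia.
- move=> i; apply: (eq_hyperbolic _ (IH (i :: L) _)); last by rewrite -hL /= !addnS !addSn.
  by move=> j k; apply: dP_perm; apply/permP => p /=; lia.
Qed.

(* Hyperbolicity of the Hessian of P, applied to the point pt and to the
   y-axis ey; by the Euler identity the three forms involved are multiples of
   dPset 0, 1, 2 at set0. *)
Lemma dPset0_ineq : (2 <= r)%N -> set0 \in Delta ->
  r%:R * dPset 0 set0 * dPset 2 set0 <= r.-1%:R * dPset 1 set0 ^+ 2.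
Proof.
move=> r_ge2 set0_in.
have xvars0 : [set e in xvars [::]] = set0 by apply/setP => e; rewrite !inE.
have dP0 : dP [::] = dPset 0 set0 by rewrite /dP /= -xvars0.
have dP1 : dP [:: None] = dPset 1 set0 by rewrite /dP /= -xvars0.
have dP2 : dP [:: None; None] = dPset 2 set0 by rewrite /dP /= -xvars0.
set Q := fun j k : option E => dP [:: j; k].
pose ey (v : option E) : R := if v is None then 1 else 0.
have Q_pt j : \sum_k Q j k * pt k = r.-1%:R * dP [:: j].
  under eq_bigr do rewrite mulrC /Q (dP_perm (perm_swap2 _ _ [::])).
  by rewrite dP_euler subn1.
have qf_pt : qf Q pt = r%:R * r.-1%:R * dPset 0 set0.
  transitivity (\sum_j pt j * (\sum_k Q j k * pt k)).
    by apply: eq_bigr => j _; rewrite mulr_sumr; apply: eq_bigr => k _; ring.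
  under eq_bigr do rewrite Q_pt mulrCA; rewrite -mulr_sumr dP_euler subn0 dP0; ring.
have bil_pt_ey : bil Q pt ey = r.-1%:R * dPset 1 set0.
  transitivity (\sum_j pt j * Q j None).
    apply: eq_bigr => j _; rewrite big_option big1 => [|e _]; last by rewrite /ey mulr0.
    by rewrite /ey mulr1 addr0 mulrC.
  by rewrite /Q dP_euler subn1 dP1.
have qf_ey : qf Q ey = dPset 2 set0.
  rewrite /qf /bil big_option big_option.
  rewrite [X in _ + X]big1 => [|e _]; last by rewrite big1 // => k _; rewrite /ey mulr0 mul0r.
  rewrite addr0 [X in _ + X]big1 => [|e _]; last by rewrite /ey mulr0.
  by rewrite /ey !mulr1 addr0 /Q dP2.
have dPset0_gt0 : 0 < dPset 0 set0.
  rewrite /dPset (bigD1 set0) /= ?set0_in ?sub0set // ltr_pwDl ?dpow_gt0 ?cards0 //.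
  by apply: sumr_ge0 => I _; exact: dpow_ge0.
have r1_gt0 : 0 < r.-1%:R :> R by rewrite ltr0n; lia.
have size_ok : (size ([::] : seq (option E)) + 2 + r.-2 = r)%N by rewrite /=; lia.
have qf_pt_gt0 : 0 < qf Q pt by rewrite qf_pt !mulr_gt0 // ltr0n; lia.
rewrite -(ler_pM2l r1_gt0).
have -> : r.-1%:R * (r%:R * dPset 0 set0 * dPset 2 set0) = qf Q pt * qf Q ey.
  by rewrite qf_pt qf_ey; ring.
have -> : r.-1%:R * (r.-1%:R * dPset 1 set0 ^+ 2) = bil Q pt ey ^+ 2.
  by rewrite bil_pt_ey; ring.
exact: (@hyperbolic_dP r.-2 [::] size_ok pt ey qf_pt_gt0).
Qed.

(* As s -> 0, dPset t set0 tends to the f-vector entry f_(r-t). *)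
Lemma dpow_lb t n : (t <= r)%N -> (n == (r - t)%N)%:R <= dpow t n.
Proof.
move=> htr; case: (eqVneq n (r - t)%N) => [->|_] /=; last exact: dpow_ge0.
rewrite /dpow; have -> : (r - t + t <= r)%N by lia.
have -> : (r - (r - t) - t = 0)%N by lia.
by rewrite divr1.
Qed.

Lemma dpow_ub t n : s <= 1 -> dpow t n <= (n == (r - t)%N)%:R + s.
Proof.
move=> s_le1; rewrite /dpow; case: ifP => h; last by rewrite addr_ge0 ?ler0n ?ltW.
case: (eqVneq n (r - t)%N) => [e|ne] /=.
  have -> : (r - n - t = 0)%N by lia.
  by rewrite divr1 lerDl ltW.
have [m hm] : exists m, (r - n - t = m.+1)%N by exists (r - n - t).-1; lia.
rewrite add0r hm ler_pdivrMr ?ltr0n ?fact_gt0 // exprS.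
apply: le_trans (ler_peMr (ltW s_gt0) (_ : 1 <= _)); last by rewrite ler1n fact_gt0.
rewrite -[X in _ <= X]mulr1; apply: ler_wpM2l; first exact: ltW.
by apply: exprn_ile1 => //; exact: ltW.
Qed.

Lemma sum_fvec n :
  \sum_(I in Delta | set0 \subset I) (#|I| == n)%:R = (fvec Delta n)%:R :> R.
Proof.
rewrite (eq_bigl (mem Delta)) => [|I]; last by rewrite sub0set andbT.
rewrite (eq_bigr (fun I : {set E} => if #|I| == n then (1 : R) else 0)) => [|I _]; last first.
  by case: (_ == _).
rewrite -big_mkcondr /= sumr_const /fvec; congr (_ *+ _).
by apply: eq_card => I; rewrite !inE.
Qed.

Lemma dPset_lb t : (t <= r)%N -> (fvec Delta (r - t))%:R <= dPset t set0.
Proof. by move=> htr; rewrite -sum_fvec; apply: ler_sum => I _; exact: dpow_lb. Qed.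

Lemma dPset_ub t : s <= 1 ->
  dPset t set0 <= (fvec Delta (r - t))%:R + s * #|Delta|%:R.
Proof.
move=> s_le1; rewrite -sum_fvec /dPset.
apply: (le_trans (y := \sum_(I in Delta | set0 \subset I) ((#|I| == (r - t)%N)%:R + s))).
  by apply: ler_sum => I _; exact: dpow_ub.
rewrite big_split /= lerD2l (eq_bigl (mem Delta)) => [|I]; last by rewrite sub0set andbT.
by rewrite sumr_const mulr_natr.
Qed.

End MatroidPolynomial.

Lemma nat_le_of_perturbation (a b k n : nat) :
  (forall s : rat, 0 < s -> s <= 1 -> a%:R <= k%:R * (b%:R + s * n%:R) ^+ 2) ->
  (a <= k * b ^ 2)%N.
Proof.
move=> ha; pose m := (k * (2 * b * n + n ^ 2))%N.
pose s : rat := (m.+1%:R)^-1.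
have s_gt0 : 0 < s by rewrite invr_gt0 ltr0n.
have s_le1 : s <= 1 by rewrite invf_le1 ?ltr0n // ler1n.
have sm_lt1 : s * m%:R < 1 by rewrite ltr_pdivrMl ?ltr0n // mulr1 ltr_nat.
suff : a%:R < (k * b ^ 2)%N%:R + 1 :> rat by rewrite natr1 ltr_nat ltnS.
apply: le_lt_trans (ha s s_gt0 s_le1) _.
have -> : k%:R * (b%:R + s * n%:R) ^+ 2 =
          (k * b ^ 2)%N%:R + s * (k%:R * (2 * b%:R * n%:R + s * n%:R ^+ 2)) :> rat.
  by rewrite natrM natrX; ring.
rewrite ltrD2l; apply: le_lt_trans sm_lt1; apply: ler_wpM2l; first exact: ltW.
rewrite /m natrM; apply: ler_wpM2l; first exact: ler0n.
have sn2 : s * n%:R ^+ 2 <= n%:R ^+ 2 by rewrite ler_piMl ?exprn_ge0 ?ler0n.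
by rewrite natrD !natrM -expr2 lerD2l.
Qed.

Lemma fvec_perturbed (E : finType) (Delta : {set {set E}}) (i : nat) (s : rat) :
  is_matroid Delta -> (1 <= i)%N -> 0 < s -> s <= 1 ->
  (i.+1 * (fvec Delta i.+1 * fvec Delta i.-1))%:R <=
    i%:R * ((fvec Delta i)%:R + s * #|Delta|%:R) ^+ 2 :> rat.
Proof.
move=> [set0_in down aug] i_ge1 s_gt0 s_le1.
have key := dPset0_ineq (r := i.+1) s_gt0 down aug i_ge1 set0_in.
have f0 := dPset_lb Delta s_gt0 (leq0n i.+1); rewrite subn0 in f0.
have f2 := dPset_lb Delta (r := i.+1) s_gt0 (t := 2) i_ge1; rewrite subn2 /= in f2.
have f1 := dPset_ub Delta i.+1 s_gt0 1 s_le1; rewrite subn1 /= in f1.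
rewrite !natrM mulrA; apply: le_trans (le_trans key _).
  by rewrite -!mulrA ler_pM2l ?ltr0n // ler_pM ?ler0n.
apply: ler_wpM2l; first exact: ler0n.
by rewrite ler_pXn2r // ?nnegrE ?dPset_ge0 // addr_ge0 ?mulr_ge0 ?ler0n ?ltW.
Qed.

Local Close Scope ring_scope.

(* Log-concavity of the f-vector, derived from the stronger inequality
   (i+1) f_(i+1) f_(i-1) <= i f_i^2. *)
Theorem mainTheorem2 (E : finType) (Delta : {set {set E}}) :
  is_matroid Delta -> realizable Delta ->
  forall i : nat, 1 <= i -> i <= (mrank Delta).-1 ->
    fvec Delta i.-1 * fvec Delta i.+1 <= fvec Delta i ^ 2.
Proof.
move=> M _ i i_ge1 _.
have strong : i.+1 * (fvec Delta i.+1 * fvec Delta i.-1) <= i * fvec Delta i ^ 2.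
  apply: (nat_le_of_perturbation (n := #|Delta|)) => s s_gt0 s_le1.
  exact: fvec_perturbed.
rewrite mulnC -(@leq_pmul2l i.+1) //; apply: leq_trans strong _.
by rewrite leq_mul2r leqnSn orbT.
Qed.
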